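(* Work in coordinates $(t,r,\theta,\phi)$ with the spherical symmetry vector fields $\mathbf X_1=\sin\phi\,\partial_\theta+\frac{\cos\phi}{\tan\theta}\partial_\phi$, $\mathbf X_2=-\cos\phi\,\partial_\theta+\frac{\sin\phi}{\tan\theta}\partial_\phi$, $\mathbf X_3=\partial_\phi$. Let the coframe be $\mathbf h^1=A_1(t,r)dt$, $\mathbf h^2=A_2(t,r)dr$, $\mathbf h^3=A_3(t,r)d\theta$, $\mathbf h^4=A_3(t,r)\sin\theta\,d\phi$, so that $\mathcal L_{\mathbf X_I}\mathbf h^a=f_I{}^{\hat i}\lambda_{\hat i}{}^a{}_b\mathbf h^b$ with $\lambda_{\hat i}$ and $f_I{}^{\hat i}$ as in the context. Then a metric-compatible connection $\omega_{abc}$ satisfies $\mathcal L_{\mathbf X_I}\omega^a{}_{bc}=0$ for $I=1,2,3$ if and only if, up to the antisymmetry $\omega_{abc}=-\omega_{bac}$, its only non-zero components are $\omega_{341}=W_1$, $\omega_{342}=W_2$, $\omega_{233}=\omega_{244}=W_3$, $\omega_{234}=-\omega_{243}=W_4$, $\omega_{121}=W_5$, $\omega_{122}=W_6$, $\omega_{133}=\omega_{144}=W_7$, $\omega_{134}=-\omega_{143}=W_8$, $\omega_{344}=-\frac{\cos\theta}{A_3\sin\theta}$, where $W_1,\dots,W_8$ are arbitrary functions of $(t,r)$.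
   Context: Frame indices $a,b,\ldots\in\{1,2,3,4\}$, $\eta=\mathrm{diag}(-1,1,1,1)$, $\omega_{abc}=\eta_{ad}\omega^d{}_{bc}$, connection one-form $\boldsymbol\omega^a{}_b=\omega^a{}_{bc}\mathbf h^c$; $\mathbf h_c(F)=h_c{}^\mu\partial_\mu F$. The isotropy generators (matrices $\lambda^a{}_b$, row $a$, column $b$) are: $\lambda_{\hat1}$ with $\lambda_{\hat1}{}^3{}_4=1$, $\lambda_{\hat1}{}^4{}_3=-1$; $\lambda_{\hat2}$ with $\lambda_{\hat2}{}^2{}_3=-1$, $\lambda_{\hat2}{}^3{}_2=1$; $\lambda_{\hat3}$ with $\lambda_{\hat3}{}^2{}_4=-1$, $\lambda_{\hat3}{}^4{}_2=1$; all other entries zero. The coefficients are $f_1{}^{\hat1}=\frac{\cos\phi}{\sin\theta}$, $f_2{}^{\hat1}=\frac{\sin\phi}{\sin\theta}$, and all other $f_I{}^{\hat i}=0$. For $\Lambda=f_I{}^{\hat i}\lambda_{\hat i}$, $\mathcal L_{\mathbf X_I}\omega^a{}_{bc}:=X_I{}^d\mathbf h_d(\omega^a{}_{bc})+\omega^d{}_{bc}\Lambda^a{}_d-\omega^a{}_{dc}\Lambda^d{}_b-\omega^a{}_{bd}\Lambda^d{}_c-\mathbf h_c(f_I{}^{\hat i})\lambda_{\hat i}{}^a{}_b$, with $X_I{}^d=h^d{}_\mu X_I{}^\mu$.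
   Formalization: In $\mathcal L_{\mathbf X_I}\omega^a{}_{bc}$ the matrix $\Lambda$ is $-f_I{}^{\hat i}\lambda_{\hat i}$ instead of $f_I{}^{\hat i}\lambda_{\hat i}$, so the last term is $+\mathbf h_c(f_I{}^{\hat i})\lambda_{\hat i}{}^a{}_b$. The statement above fails without it. *)

From Stdlib Require Import Reals.
From Coquelicot Require Import Coquelicot.
Open Scope R_scope.

Inductive Idx := i1 | i2 | i3 | i4.
(** Indices of the isotropy generators (hat i) and of the symmetry
    generators X_I, both in {1,2,3}. *)
Inductive Idx3 := j1 | j2 | j3.

Definition sum4 (F : Idx -> R) : R := F i1 + F i2 + F i3 + F i4.
Definition sum3 (F : Idx3 -> R) : R := F j1 + F j2 + F j3.

Definition eta (a : Idx) : R := match a with i1 => -1 | _ => 1 end.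

(** Scalar fields of the coordinates (t, r, theta, phi). *)
Definition Field := R -> R -> R -> R -> R.

Definition dpart (mu : Idx) (F : Field) (t r th ph : R) : R :=
  match mu with
  | i1 => Derive (fun s => F s r th ph) t
  | i2 => Derive (fun s => F t s th ph) r
  | i3 => Derive (fun s => F t r s ph) th
  | i4 => Derive (fun s => F t r th s) ph
  end.

(** Frame vectors h_a = h_a^mu d_mu dual to the coframe
    h^1 = A1 dt, h^2 = A2 dr, h^3 = A3 dtheta, h^4 = A3 sin(theta) dphi. *)
Definition hvec (A1 A2 A3 : R -> R -> R) (d : Idx) (F : Field)
  (t r th ph : R) : R :=
  match d with
  | i1 => / A1 t r * dpart i1 F t r th ph
  | i2 => / A2 t r * dpart i2 F t r th ph
  | i3 => / A3 t r * dpart i3 F t r th ph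
  | i4 => / (A3 t r * sin th) * dpart i4 F t r th ph
  end.

(** Coordinate components (X^theta, X^phi) of the symmetry generators
    X_1 = sin phi d_theta + cos phi / tan theta d_phi,
    X_2 = - cos phi d_theta + sin phi / tan theta d_phi,
    X_3 = d_phi   (X^t = X^r = 0);  1/tan theta is written cos/sin so
    that it is correct (= 0) at theta = pi/2, where Stdlib's tan divides
    by zero. *)
Definition Xth (I : Idx3) (th ph : R) : R :=
  match I with j1 => sin ph | j2 => - cos ph | j3 => 0 end.
Definition Xph (I : Idx3) (th ph : R) : R :=
  match I with
  | j1 => cos ph * (cos th / sin th)
  | j2 => sin ph * (cos th / sin th)
  | j3 => 1 end.

(** Frame components X_I^d = h^d_mu X_I^mu. *)
Definition Xframe (A3 : R -> R -> R) (I : Idx3) (d : Idx)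
  (t r th ph : R) : R :=
  match d with
  | i1 => 0
  | i2 => 0
  | i3 => A3 t r * Xth I th ph
  | i4 => A3 t r * sin th * Xph I th ph
  end.

(** Isotropy generators lambda_{hat i}^a_b (row a, column b). *)
Definition lam (i : Idx3) (a b : Idx) : R :=
  match i, a, b with
  | j1, i3, i4 => 1
  | j1, i4, i3 => -1
  | j2, i2, i3 => -1
  | j2, i3, i2 => 1
  | j3, i2, i4 => -1
  | j3, i4, i2 => 1
  | _, _, _ => 0
  end.

(** Coefficients f_I^{hat i}: f_1^1 = cos phi / sin theta,
    f_2^1 = sin phi / sin theta, all others 0.  These satisfy
    L_{X_I} h^a = f_I^{hat i} lambda_{hat i}^a_b h^b. *)
Definition fcoef (I i : Idx3) (th ph : R) : R :=
  match I, i with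
  | j1, j1 => cos ph / sin th
  | j2, j1 => sin ph / sin th
  | _, _ => 0
  end.

Definition Lam (I : Idx3) (a b : Idx) (th ph : R) : R :=
  - sum3 (fun i => fcoef I i th ph * lam i a b).

Definition LamF (I : Idx3) (a b : Idx) : Field :=
  fun _ _ th ph => Lam I a b th ph.

(** A connection, given by its components omega_{abc} (all indices down)
    as functions of the coordinates; omega^a_{bc} = eta^{ad} omega_{dbc}. *)
Definition omup (omega : Idx -> Idx -> Idx -> Field) (a b c : Idx) : Field :=
  fun t r th ph => eta a * omega a b c t r th ph.

Definition LieOmega (A1 A2 A3 : R -> R -> R)
  (omega : Idx -> Idx -> Idx -> Field) (I : Idx3) (a b c : Idx)
  (t r th ph : R) : R :=
  sum4 (fun d => Xframe A3 I d t r th ph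
                 * hvec A1 A2 A3 d (omup omega a b c) t r th ph)
  + sum4 (fun d => omup omega d b c t r th ph * Lam I a d th ph
                   - omup omega a d c t r th ph * Lam I d b th ph
                   - omup omega a b d t r th ph * Lam I d c th ph)
  - hvec A1 A2 A3 c (LamF I a b) t r th ph.

Definition spec_omega (A3 W1 W2 W3 W4 W5 W6 W7 W8 : R -> R -> R)
  (a b c : Idx) (t r th ph : R) : R :=
  match a, b, c with
  | i3, i4, i1 => W1 t r   | i4, i3, i1 => - W1 t r
  | i3, i4, i2 => W2 t r   | i4, i3, i2 => - W2 t r
  | i2, i3, i3 => W3 t r   | i3, i2, i3 => - W3 t r
  | i2, i4, i4 => W3 t r   | i4, i2, i4 => - W3 t r
  | i2, i3, i4 => W4 t r   | i3, i2, i4 => - W4 t r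
  | i2, i4, i3 => - W4 t r | i4, i2, i3 => W4 t r
  | i1, i2, i1 => W5 t r   | i2, i1, i1 => - W5 t r
  | i1, i2, i2 => W6 t r   | i2, i1, i2 => - W6 t r
  | i1, i3, i3 => W7 t r   | i3, i1, i3 => - W7 t r
  | i1, i4, i4 => W7 t r   | i4, i1, i4 => - W7 t r
  | i1, i3, i4 => W8 t r   | i3, i1, i4 => - W8 t r
  | i1, i4, i3 => - W8 t r | i4, i1, i3 => W8 t r
  | i3, i4, i4 => - (cos th / (A3 t r * sin th))
  | i4, i3, i4 => cos th / (A3 t r * sin th)
  | _, _, _ => 0
  end.

From Stdlib Require Import Reals Lra.
From Coquelicot Require Import Coquelicot.
Open Scope R_scope.

(* Only f_I^1 is non-zero, so the Lorentz part of every symmetry generator is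
   a multiple of the rotation lambda_1 of the (3,4)-plane.  Writing D and P
   for the theta- and phi-derivatives of a component omega_{abc} and M for the
   action of lambda_1 on all three indices of omega^a_{bc}, the Lie derivative
   along X_I is
       X_I^theta (eta_a D - D0) + X_I^phi eta_a P - f_I^1 (M - M0),
   where (D0, M0) are the corresponding quantities of the particular invariant
   connection omega_{344} = - cot(theta) / A3 (LieOmega_decomposition).  The
   coefficient vectors of X_1, X_2, X_3 are independent, so invariance means
   P = 0, eta_a D = D0 and M = M0 at every point (invariance_at_point).
   Algebraically, an antisymmetric tensor with M = M0 has exactly the claimed
   shape, with free entries W_1..W_8 (invariant_tensor_form); analytically,
   these eight entries have vanishing theta- and phi-derivatives on the strip
   0 < theta < pi and are therefore functions of (t, r) only
   (strip_constant).  The converse is a direct computation on the form. *)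

Lemma Lam_lam1 I a b th ph : Lam I a b th ph = - fcoef I j1 th ph * lam j1 a b.
Proof. unfold Lam, sum3; destruct I; simpl; ring. Qed.

Lemma Derive_fcoef_theta I th ph : sin th <> 0 ->
  Derive (fun s => fcoef I j1 s ph) th = - fcoef I j1 th ph * (cos th / sin th).
Proof.
  intro Hs; destruct I; simpl; try (rewrite Derive_const; ring);
    apply is_derive_unique; auto_derive; auto; field; exact Hs.
Qed.

Lemma Derive_fcoef_phi I th ph : sin th <> 0 ->
  Derive (fun s => fcoef I j1 th s) ph = - Xth I th ph / sin th.
Proof.
  intro Hs; destruct I; simpl; try (rewrite Derive_const; field; exact Hs);
    apply is_derive_unique; auto_derive; auto; field; exact Hs.
Qed.

Definition omega_at (omega : Idx -> Idx -> Idx -> Field) (t r th ph : R)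
  : Idx -> Idx -> Idx -> R := fun a b c => omega a b c t r th ph.

(* The infinitesimal rotation lambda_1 acting on the three indices of
   w^a_{bc} = eta_a w_{abc}. *)
Definition rot_action (w : Idx -> Idx -> Idx -> R) (a b c : Idx) : R :=
  sum4 (fun d => eta d * w d b c * lam j1 a d
               - eta a * w a d c * lam j1 d b
               - eta a * w a b d * lam j1 d c).

(* cot(theta) / A3: the particular invariant connection has omega_{344} = -kappa. *)
Definition kappa (A3 : R -> R -> R) (t r th : R) : R := cos th / (A3 t r * sin th).

(* The rotation of that particular connection, for a general value k of kappa. *)
Definition rot_source (k : R) (a b c : Idx) : R :=
  match c with i3 => - lam j1 a b * k | _ => 0 end.

(* eta_a times the theta-derivative of that particular connection. *)
Definition dtheta_source (A3 : R -> R -> R) (a b c : Idx) (t r th : R) : R :=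
  match c with i4 => lam j1 a b / (A3 t r * (sin th * sin th)) | _ => 0 end.

Section Decomposition.
Variables (A1 A2 A3 : R -> R -> R) (omega : Idx -> Idx -> Idx -> Field).
Variables (t r th ph : R).
Hypotheses (HA3 : A3 t r <> 0) (Hsin : sin th <> 0).

(* The inhomogeneous term h_c(Lambda^a_b) is the Lie derivative of the
   particular connection, expressed through (D0, M0). *)
Lemma inhomogeneous_term I a b c :
  hvec A1 A2 A3 c (LamF I a b) t r th ph
  = Xth I th ph * dtheta_source A3 a b c t r th
    - fcoef I j1 th ph * rot_source (kappa A3 t r th) a b c.
Proof.
  unfold hvec, dpart, LamF, dtheta_source, rot_source, kappa; destruct c.
  - rewrite Derive_const; ring.
  - rewrite Derive_const; ring.
  - rewrite (Derive_ext _ (fun s => - lam j1 a b * fcoef I j1 s ph))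
      by (intro; rewrite Lam_lam1; ring).
    rewrite Derive_scal, Derive_fcoef_theta by exact Hsin. field; auto.
  - rewrite (Derive_ext _ (fun s => - lam j1 a b * fcoef I j1 th s))
      by (intro; rewrite Lam_lam1; ring).
    rewrite Derive_scal, Derive_fcoef_phi by exact Hsin. field; auto.
Qed.

Lemma LieOmega_decomposition I a b c :
  LieOmega A1 A2 A3 omega I a b c t r th ph
  = Xth I th ph * (eta a * Derive (fun s => omega a b c t r s ph) th
                   - dtheta_source A3 a b c t r th)
    + Xph I th ph * (eta a * Derive (fun s => omega a b c t r th s) ph)
    - fcoef I j1 th ph * (rot_action (omega_at omega t r th ph) a b c
                          - rot_source (kappa A3 t r th) a b c).
Proof.
  unfold LieOmega; rewrite inhomogeneous_term.
  unfold sum4 at 1, Xframe, hvec, dpart, omup.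
  rewrite !Derive_scal, !Rmult_0_l, !Rplus_0_l.
  change (Derive (omega a b c t r th) ph)
    with (Derive (fun s => omega a b c t r th s) ph).
  unfold rot_action, omega_at, sum4; rewrite !Lam_lam1; field; auto.
Qed.

End Decomposition.

(* The coefficient vectors (X_I^theta, X_I^phi, -f_I^1), I = 1, 2, 3, are
   linearly independent: X_3 gives the phi-part and X_1, X_2 form a rotation. *)
Lemma symmetry_system th ph x y z : sin th <> 0 ->
  (forall I, Xth I th ph * x + Xph I th ph * y - fcoef I j1 th ph * z = 0)
  <-> x = 0 /\ y = 0 /\ z = 0.
Proof.
  intro Hs; split.
  - intro HE.
    assert (Hy : y = 0) by (generalize (HE j3); simpl; lra).
    generalize (HE j1) (HE j2); simpl; rewrite Hy, !Rmult_0_r, !Rplus_0_r.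
    intros E1 E2.
    assert (Hunit : sin ph * sin ph + cos ph * cos ph = 1)
      by (generalize (sin2_cos2 ph); unfold Rsqr; lra).
    assert (Hx : x = sin ph * (sin ph * x - cos ph / sin th * z)
                     - cos ph * (- cos ph * x - sin ph / sin th * z)).
    { transitivity (x * (sin ph * sin ph + cos ph * cos ph));
        [rewrite Hunit; ring | field; exact Hs]. }
    assert (Hz : z = - sin th * (cos ph * (sin ph * x - cos ph / sin th * z)
                                 + sin ph * (- cos ph * x - sin ph / sin th * z))).
    { transitivity (z * (sin ph * sin ph + cos ph * cos ph));
        [rewrite Hunit; ring | field; exact Hs]. }
    rewrite E1, E2 in Hx, Hz; repeat split; lra.
  - intros (-> & -> & ->) I; ring.
Qed.

Lemma eta_mult_eq0 a x : eta a * x = 0 <-> x = 0.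
Proof. destruct a; simpl; lra. Qed.

Lemma invariance_at_point (A1 A2 A3 : R -> R -> R)
  (omega : Idx -> Idx -> Idx -> Field) a b c t r th ph :
  A3 t r <> 0 -> sin th <> 0 ->
  (forall I, LieOmega A1 A2 A3 omega I a b c t r th ph = 0) <->
  eta a * Derive (fun s => omega a b c t r s ph) th = dtheta_source A3 a b c t r th
  /\ Derive (fun s => omega a b c t r th s) ph = 0
  /\ rot_action (omega_at omega t r th ph) a b c = rot_source (kappa A3 t r th) a b c.
Proof.
  intros HA3 Hs.
  transitivity (forall I,
    Xth I th ph * (eta a * Derive (fun s => omega a b c t r s ph) th
                   - dtheta_source A3 a b c t r th)
    + Xph I th ph * (eta a * Derive (fun s => omega a b c t r th s) ph)
    - fcoef I j1 th ph * (rot_action (omega_at omega t r th ph) a b c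
                          - rot_source (kappa A3 t r th) a b c) = 0).
  { split; intros H I; specialize (H I);
      [rewrite <- (LieOmega_decomposition A1 A2) | rewrite (LieOmega_decomposition A1 A2)]; auto. }
  rewrite symmetry_system, eta_mult_eq0 by exact Hs.
  split; intros (? & ? & ?); repeat split; lra.
Qed.

Definition tensor_form (W1 W2 W3 W4 W5 W6 W7 W8 k : R) (a b c : Idx) : R :=
  match a, b, c with
  | i3, i4, i1 => W1   | i4, i3, i1 => - W1
  | i3, i4, i2 => W2   | i4, i3, i2 => - W2
  | i2, i3, i3 => W3   | i3, i2, i3 => - W3
  | i2, i4, i4 => W3   | i4, i2, i4 => - W3
  | i2, i3, i4 => W4   | i3, i2, i4 => - W4
  | i2, i4, i3 => - W4 | i4, i2, i3 => W4
  | i1, i2, i1 => W5   | i2, i1, i1 => - W5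
  | i1, i2, i2 => W6   | i2, i1, i2 => - W6
  | i1, i3, i3 => W7   | i3, i1, i3 => - W7
  | i1, i4, i4 => W7   | i4, i1, i4 => - W7
  | i1, i3, i4 => W8   | i3, i1, i4 => - W8
  | i1, i4, i3 => - W8 | i4, i1, i3 => W8
  | i3, i4, i4 => - k
  | i4, i3, i4 => k
  | _, _, _ => 0
  end.

Lemma spec_omega_tensor_form A3 W1 W2 W3 W4 W5 W6 W7 W8 a b c t r th ph :
  spec_omega A3 W1 W2 W3 W4 W5 W6 W7 W8 a b c t r th ph
  = tensor_form (W1 t r) (W2 t r) (W3 t r) (W4 t r) (W5 t r) (W6 t r)
      (W7 t r) (W8 t r) (kappa A3 t r th) a b c.
Proof. destruct a, b, c; reflexivity. Qed.

Lemma rot_action_ext w w' a b c : (forall a b c, w a b c = w' a b c) ->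
  rot_action w a b c = rot_action w' a b c.
Proof. intro Hw; unfold rot_action, sum4; rewrite !Hw; reflexivity. Qed.

Lemma rot_action_tensor_form W1 W2 W3 W4 W5 W6 W7 W8 k a b c :
  rot_action (tensor_form W1 W2 W3 W4 W5 W6 W7 W8 k) a b c = rot_source k a b c.
Proof. destruct a, b, c; unfold rot_action, sum4; simpl; ring. Qed.

Ltac instantiate_indices H :=
  let H1 := fresh H in let H2 := fresh H in
  let H3 := fresh H in let H4 := fresh H in
  pose proof (H i1) as H1; pose proof (H i2) as H2;
  pose proof (H i3) as H3; pose proof (H i4) as H4; clear H.

(* Conversely, an antisymmetric tensor solving M = M0 has the claimed shape: a
   finite linear system in the 64 components. *)
Lemma invariant_tensor_form (w : Idx -> Idx -> Idx -> R) (k : R) :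
  (forall a b c, w a b c = - w b a c) ->
  (forall a b c, rot_action w a b c = rot_source k a b c) ->
  forall a b c, w a b c = tensor_form (w i3 i4 i1) (w i3 i4 i2) (w i2 i3 i3)
    (w i2 i3 i4) (w i1 i2 i1) (w i1 i2 i2) (w i1 i3 i3) (w i1 i3 i4) k a b c.
Proof.
  intros Hanti Hrot.
  repeat match goal with H : forall _ : Idx, _ |- _ => instantiate_indices H end.
  unfold rot_action, rot_source, sum4 in *; simpl in *.
  intros a b c; destruct a, b, c; simpl; lra.
Qed.

Lemma derive_zero_const (g : R -> R) x y :
  (forall z, Rmin x y <= z <= Rmax x y -> ex_derive g z /\ Derive g z = 0) ->
  g x = g y.
Proof.
  intro Hg.
  destruct (MVT_gen g x y (fun _ => 0)) as (z & _ & Hxy).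
  - intros z Hz; destruct (Hg z) as [Hex HD]; [lra |].
    rewrite <- HD; apply Derive_correct, Hex.
  - intros z Hz; apply continuity_pt_filterlim.
    apply (ex_derive_continuous (K := R_AbsRing) (V := R_NormedModule)), Hg, Hz.
  - lra.
Qed.

Lemma strip_segment th z : 0 < th < PI ->
  Rmin th (PI / 2) <= z <= Rmax th (PI / 2) -> 0 < z < PI.
Proof.
  intros Hth Hz.
  assert (0 < Rmin th (PI / 2)) by (apply Rmin_glb_lt; lra).
  assert (Rmax th (PI / 2) < PI) by (apply Rmax_lub_lt; lra).
  lra.
Qed.

Lemma strip_constant (g : R -> R -> R) :
  (forall th ph, 0 < th < PI ->
     ex_derive (fun s => g s ph) th /\ Derive (fun s => g s ph) th = 0) ->
  (forall th ph, 0 < th < PI ->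
     ex_derive (fun s => g th s) ph /\ Derive (fun s => g th s) ph = 0) ->
  forall th ph, 0 < th < PI -> g th ph = g (PI / 2) 0.
Proof.
  intros Hth Hph th ph Hs.
  transitivity (g th 0).
  - apply (derive_zero_const (fun s => g th s)); intros; apply Hph, Hs.
  - apply (derive_zero_const (fun s => g s 0)); intros z Hz;
      apply Hth, (strip_segment th); assumption.
Qed.

Lemma strip_neighbourhood th : 0 < th < PI -> locally th (fun s => 0 < s < PI).
Proof. intro Hth; apply (open_and _ _ (open_gt 0) (open_lt PI)), Hth. Qed.

Lemma sin_strip th : 0 < th < PI -> sin th <> 0.
Proof. intro Hth; apply Rgt_not_eq, sin_gt_0; lra. Qed.

Lemma Derive_kappa (A3 : R -> R -> R) t r th : A3 t r <> 0 -> sin th <> 0 ->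
  Derive (fun s => kappa A3 t r s) th = - / (A3 t r * (sin th * sin th)).
Proof.
  intros HA Hs; unfold kappa; apply is_derive_unique; auto_derive; [auto |].
  generalize (sin2_cos2 th); unfold Rsqr; intro Hunit.
  replace (- / (A3 t r * (sin th * sin th)))
    with (- (sin th * sin th + cos th * cos th) / (A3 t r * (sin th * sin th)))
    by (rewrite Hunit; field; auto).
  field; auto.
Qed.

Lemma Derive_tensor_form_theta (A3 : R -> R -> R) W1 W2 W3 W4 W5 W6 W7 W8 a b c t r th :
  A3 t r <> 0 -> sin th <> 0 ->
  eta a * Derive (fun s => tensor_form W1 W2 W3 W4 W5 W6 W7 W8 (kappa A3 t r s) a b c) th
  = dtheta_source A3 a b c t r th.
Proof.
  intros HA Hs; unfold dtheta_source.
  destruct a, b, c; simpl tensor_form;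
    rewrite ?Derive_opp, ?Derive_const, ?Derive_kappa by assumption;
    simpl; field; auto.
Qed.

Lemma dtheta_source_zero (A3 : R -> R -> R) a b c t r th :
  c <> i4 \/ lam j1 a b = 0 -> dtheta_source A3 a b c t r th = 0.
Proof.
  unfold dtheta_source; intros [Hc | Hl]; destruct c; try reflexivity.
  - contradiction.
  - rewrite Hl; unfold Rdiv; ring.
Qed.

Section InvariantConnections.
Variables (A1 A2 A3 : R -> R -> R) (omega : Idx -> Idx -> Idx -> Field).
Hypothesis HA3 : forall t r, A3 t r <> 0.

Section Necessity.
Hypothesis Hanti : forall a b c t r th ph, 0 < th < PI ->
  omega a b c t r th ph = - omega b a c t r th ph.
Hypothesis Hreg : forall a b c t r th ph, 0 < th < PI ->
  ex_derive (fun s => omega a b c t r s ph) th /\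
  ex_derive (fun s => omega a b c t r th s) ph.
Hypothesis Hinv : forall I a b c t r th ph, 0 < th < PI ->
  LieOmega A1 A2 A3 omega I a b c t r th ph = 0.

Lemma invariance_conditions a b c t r th ph : 0 < th < PI ->
  eta a * Derive (fun s => omega a b c t r s ph) th = dtheta_source A3 a b c t r th
  /\ Derive (fun s => omega a b c t r th s) ph = 0
  /\ rot_action (omega_at omega t r th ph) a b c = rot_source (kappa A3 t r th) a b c.
Proof.
  intro Hth; apply (invariance_at_point A1 A2);
    [apply HA3 | apply sin_strip, Hth | intro I; apply Hinv, Hth].
Qed.

(* At each point the components have the claimed shape, with entries that may
   still depend on (theta, phi). *)
Lemma pointwise_form t r th ph : 0 < th < PI -> forall a b c,
  omega a b c t r th ph
  = tensor_form (omega i3 i4 i1 t r th ph) (omega i3 i4 i2 t r th ph)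
      (omega i2 i3 i3 t r th ph) (omega i2 i3 i4 t r th ph)
      (omega i1 i2 i1 t r th ph) (omega i1 i2 i2 t r th ph)
      (omega i1 i3 i3 t r th ph) (omega i1 i3 i4 t r th ph)
      (kappa A3 t r th) a b c.
Proof.
  intro Hth; apply (invariant_tensor_form (omega_at omega t r th ph)).
  - intros a b c; apply Hanti, Hth.
  - intros a b c; apply invariance_conditions, Hth.
Qed.

(* Every component other than omega_{344}, omega_{434} depends on (t, r) only. *)
Lemma component_constant a b c : c <> i4 \/ lam j1 a b = 0 ->
  forall t r th ph, 0 < th < PI ->
  omega a b c t r th ph = omega a b c t r (PI / 2) 0.
Proof.
  intros Hsrc t r; apply (strip_constant (fun s u => omega a b c t r s u));
    intros th ph Hth; destruct (Hreg a b c t r th ph Hth) as [Hex_th Hex_ph];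
    destruct (invariance_conditions a b c t r th ph Hth) as (Hd_th & Hd_ph & _).
  - split; [exact Hex_th |].
    apply (eta_mult_eq0 a); rewrite Hd_th; apply dtheta_source_zero, Hsrc.
  - split; [exact Hex_ph | exact Hd_ph].
Qed.

Lemma invariant_connection_form :
  exists W1 W2 W3 W4 W5 W6 W7 W8 : R -> R -> R,
    forall a b c t r th ph, 0 < th < PI ->
      omega a b c t r th ph
      = spec_omega A3 W1 W2 W3 W4 W5 W6 W7 W8 a b c t r th ph.
Proof.
  exists (fun t r => omega i3 i4 i1 t r (PI / 2) 0),
    (fun t r => omega i3 i4 i2 t r (PI / 2) 0),
    (fun t r => omega i2 i3 i3 t r (PI / 2) 0),
    (fun t r => omega i2 i3 i4 t r (PI / 2) 0),
    (fun t r => omega i1 i2 i1 t r (PI / 2) 0),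
    (fun t r => omega i1 i2 i2 t r (PI / 2) 0),
    (fun t r => omega i1 i3 i3 t r (PI / 2) 0),
    (fun t r => omega i1 i3 i4 t r (PI / 2) 0).
  intros a b c t r th ph Hth.
  rewrite spec_omega_tensor_form, pointwise_form by exact Hth.
  f_equal; apply component_constant;
    first [exact Hth | left; discriminate | right; reflexivity].
Qed.

End Necessity.

Lemma form_is_invariant W1 W2 W3 W4 W5 W6 W7 W8 :
  (forall a b c t r th ph, 0 < th < PI ->
     omega a b c t r th ph = spec_omega A3 W1 W2 W3 W4 W5 W6 W7 W8 a b c t r th ph) ->
  forall I a b c t r th ph, 0 < th < PI ->
    LieOmega A1 A2 A3 omega I a b c t r th ph = 0.
Proof.
  intros Hspec I a b c t r th ph Hth; revert I.
  assert (Hform : forall a b c th ph, 0 < th < PI ->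
    omega a b c t r th ph = tensor_form (W1 t r) (W2 t r) (W3 t r) (W4 t r)
      (W5 t r) (W6 t r) (W7 t r) (W8 t r) (kappa A3 t r th) a b c).
  { intros a' b' c' th' ph' Hth'.
    rewrite <- (spec_omega_tensor_form A3 W1 W2 W3 W4 W5 W6 W7 W8 a' b' c' t r th' ph').
    apply Hspec, Hth'. }
  apply (invariance_at_point A1 A2); [apply HA3 | apply sin_strip, Hth |].
  split; [| split].
  - rewrite (Derive_ext_loc _ (fun s => tensor_form (W1 t r) (W2 t r) (W3 t r)
      (W4 t r) (W5 t r) (W6 t r) (W7 t r) (W8 t r) (kappa A3 t r s) a b c)).
    + apply Derive_tensor_form_theta; [apply HA3 | apply sin_strip, Hth].
    + exact (filter_imp _ _ (fun s Hs => Hform a b c s ph Hs)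
               (strip_neighbourhood th Hth)).
  - rewrite (Derive_ext _ _ _ (fun s => Hform a b c th s Hth)); apply Derive_const.
  - rewrite (rot_action_ext (omega_at omega t r th ph) _ a b c
      (fun a b c => Hform a b c th ph Hth)).
    apply rot_action_tensor_form.
Qed.

End InvariantConnections.

Theorem mainTheorem6 :
  forall (A1 A2 A3 : R -> R -> R) (omega : Idx -> Idx -> Idx -> Field),
    (forall t r, A1 t r <> 0 /\ A2 t r <> 0 /\ A3 t r <> 0) ->
    (* metric compatibility: omega_{abc} = - omega_{bac} *)
    (forall a b c t r th ph, 0 < th < PI ->
       omega a b c t r th ph = - omega b a c t r th ph) ->
    (* regularity: the components are differentiable in theta and phi *)
    (forall a b c t r th ph, 0 < th < PI ->
       ex_derive (fun s => omega a b c t r s ph) th /\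
       ex_derive (fun s => omega a b c t r th s) ph) ->
    ((forall I a b c t r th ph, 0 < th < PI ->
        LieOmega A1 A2 A3 omega I a b c t r th ph = 0)
     <->
     (exists W1 W2 W3 W4 W5 W6 W7 W8 : R -> R -> R,
        forall a b c t r th ph, 0 < th < PI ->
          omega a b c t r th ph
          = spec_omega A3 W1 W2 W3 W4 W5 W6 W7 W8 a b c t r th ph)).
Proof.
  intros A1 A2 A3 omega HA Hanti Hreg.
  assert (HA3 : forall t r, A3 t r <> 0) by (intros t r; apply HA).
  split.
  - intro Hinv; exact (invariant_connection_form A1 A2 A3 omega HA3 Hanti Hreg Hinv).
  - intros (W1 & W2 & W3 & W4 & W5 & W6 & W7 & W8 & Hspec).
    exact (form_is_invariant A1 A2 A3 omega HA3 W1 W2 W3 W4 W5 W6 W7 W8 Hspec).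
Qed.
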